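(* Let $H\Gamma=(C,\{\mathcal W,\mathcal X,\mathcal Y,\mathcal Z\},G_{zx},G_{wy})$ be a Lagrangian hypercube diagram and $L$ the embedded Legendrian torus obtained as the lift of the Lagrangian torus it determines. Then the Maslov number of $L$ equals $2\gcd(w(G_{zx}),w(G_{wy}))$ (a non-negative integer), where $w(G)=\frac14(\#\text{counterclockwise corners of }G-\#\text{clockwise corners of }G)$.
   Context: Grid conventions. In a plane with coordinates $(a,b)$ (below $(a,b)=(w,y)$ or $(a,b)=(z,x)$), an immersed grid diagram of size $n$ is an $n\times n$ grid of unit cells in $[0,n]^2$ with two kinds of markings at centers of cells, each row and each column containing exactly one marking of each kind; joining each marking of the first kind to the marking of the second kind in its row by an $a$-parallel segment, and each marking of the second kind to the marking of the first kind in its column by a $b$-parallel segment, gives an oriented connected closed piecewise-linear curve, with no crossing information, viewed as an immersion $\gamma:\mathbb{R}/2\pi\mathbb{Z}\to\mathbb{R}^2$, $\theta\mapsto(a(\theta),b(\theta))$. It is a Lagrangian grid diagram if (1) $\int_0^{2\pi}b\,a'\,d\theta=0$ and (2) $\int_{\theta_0}^{\theta_1}b\,a'\,d\theta\neq0$ whenever $\theta_0\neq\theta_1$ and $\gamma(\theta_0)=\gamma(\theta_1)$. For a crossing $c=\gamma(\theta_0)=\gamma(\theta_1)$ put $|\Delta t(c)|=|\int_{\theta_0}^{\theta_1}b\,a'\,d\theta|$. The corners are the markings; a corner is counterclockwise (resp. clockwise) if the curve turns left (resp. right) there relative to the orientation of the $(a,b)$-plane. Hypercube diagrams. Let $C=[0,n]^4$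 with coordinates $(w,x,y,z)$. A flat is a product in which two coordinates range over $[0,n]$ and the other two over unit intervals $[k,k+1]$, named by its two full coordinates; a cube is a product in which three coordinates range over $[0,n]$ and one over a unit interval. Markings are points with coordinates in $\mathbb{Z}+\frac12$ labelled $W,X,Y,Z$. Marking conditions: each cube contains exactly one marking of each label; each cube contains exactly two flats containing exactly three markings; in each such flat the three markings form a right angle with rays parallel to coordinate axes; its vertex is $W$ iff the flat is a $zw$-flat, $X$ iff a $wx$-flat, $Y$ iff an $xy$-flat, $Z$ iff a $yz$-flat. Join each $W$ to an $X$ by a $w$-parallel segment, each $X$ to a $Y$ by an $x$-parallel segment, each $Y$ to a $Z$ by a $y$-parallel segment and each $Z$ to a $W$ by a $z$-parallel segment; the projections of this curve to the $(w,y)$- and $(z,x)$-planes are immersed grid diagrams $G_{wy}$ ($(a,b)=(w,y)$) and $G_{zx}$ ($(a,b)=(z,x)$). $H\Gamma$ is a Lagrangian hypercube diagram if the marking conditions hold, $G_{wy},G_{zx}$ are Lagrangian grid diagrams, and $|\Delta t(c)|\neq|\Delta t(c')|$ for all crossings $c$ of $G_{zx}$ and $c'$ of $G_{wy}$. Torus and lift. With $G_{zx}$ parametrized by $s\mapsto(z(s),x(s))$ and $G_{wy}$ by $u\mapsto(w(u),y(u))$ (corners slightly smoothed preserving (1),(2)), the torus is $i(s,u)=(w(u),x(s),y(u),z(s))$, Lagrangian for $\omega=dw\wedge dy+dz\wedge dx$. In $\mathbb{R}^5$ with coordinates $(w,x,y,z,t)$ and contact form $dt-y\,dw-x\,dz$,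 the lift is $L=\{(i(p),t(p))\}$, $t(p)=t_0+\int_\gamma(y\,dw+x\,dz)$ along a path from a base point to $p$. The Maslov index of a loop is the Maslov index of the loop of (unoriented) Lagrangian tangent planes of $i$ along it. The Maslov number of $L$ is the smallest positive integer that is the Maslov index of some loop in $L$, and $0$ if every loop has Maslov index $0$; here $\gcd(0,0)=0$. *)

From Stdlib Require Import Reals Lra List ZArith Permutation Bool.
From Coquelicot Require Import Coquelicot.
Import ListNotations.
Open Scope R_scope.
Local Open Scope bool_scope.

Inductive axis := AW | AX | AY | AZ.
Inductive label := LW | LX | LY | LZ.

Definition axis_eqb (a b : axis) : bool :=
  match a, b with
  | AW, AW | AX, AX | AY, AY | AZ, AZ => true
  | _, _ => false
  end.

Definition label_eqb (a b : label) : bool :=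
  match a, b with
  | LW, LW | LX, LX | LY, LY | LZ, LZ => true
  | _, _ => false
  end.

(* A marking position: the point whose coordinates (w,x,y,z) are
   (k_w + 1/2, k_x + 1/2, k_y + 1/2, k_z + 1/2); it lies in C = [0,n]^4 iff all
   k_* < n. *)
Record pt : Type := Pt { kw : nat; kx : nat; ky : nat; kz : nat }.

Definition get (p : pt) (a : axis) : nat :=
  match a with AW => kw p | AX => kx p | AY => ky p | AZ => kz p end.

Definition differ_only (p q : pt) (a : axis) : Prop :=
  get p a <> get q a /\ forall b, b <> a -> get p b = get q b.

(* The curve of a hypercube diagram is described by the cyclic list of its
   consecutive quadruples (W_i, X_i, Y_i, Z_i): W_i is joined to X_i by a
   w-parallel segment, X_i to Y_i by an x-parallel one, Y_i to Z_i by a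
   y-parallel one and Z_i to W_(i+1) (indices mod the length) by a z-parallel one. *)
Definition quad := (pt * pt * pt * pt)%type.

Definition qW (q : quad) : pt := let '(w, _, _, _) := q in w.
Definition qX (q : quad) : pt := let '(_, x, _, _) := q in x.
Definition qY (q : quad) : pt := let '(_, _, y, _) := q in y.
Definition qZ (q : quad) : pt := let '(_, _, _, z) := q in z.

Definition dflt_pt : pt := Pt 0 0 0 0.
Definition dflt_quad : quad := (dflt_pt, dflt_pt, dflt_pt, dflt_pt).

Definition markings (qs : list quad) : list (label * pt) :=
  flat_map (fun q => [(LW, qW q); (LX, qX q); (LY, qY q); (LZ, qZ q)]) qs.

Definition is_curve (qs : list quad) : Prop :=
  (0 < length qs)%nat /\
  forall i, (i < length qs)%nat ->
    let q := nth i qs dflt_quad in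
    let q' := nth ((i + 1) mod length qs) qs dflt_quad in
    differ_only (qW q) (qX q) AW /\ differ_only (qX q) (qY q) AX /\
    differ_only (qY q) (qZ q) AY /\ differ_only (qZ q) (qW q') AZ.

Definition in_grid (n : nat) (qs : list quad) : Prop :=
  forall lp, In lp (markings qs) -> forall a, (get (snd lp) a < n)%nat.

Definition flat_list (qs : list quad) (a1 : axis) (k1 : nat) (a2 : axis) (k2 : nat)
  : list (label * pt) :=
  filter (fun lp => Nat.eqb (get (snd lp) a1) k1 && Nat.eqb (get (snd lp) a2) k2)
    (markings qs).

(* each cube {p_a in [k,k+1]} contains exactly one marking of each label *)
Definition cube_one_each (n : nat) (qs : list quad) : Prop :=
  forall a k L, (k < n)%nat ->
    length (filter (fun lp => label_eqb (fst lp) L && Nat.eqb (get (snd lp) a) k)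
              (markings qs)) = 1%nat.

Definition all_axes : list axis := [AW; AX; AY; AZ].

(* each cube {p_a in [k,k+1]} contains exactly two flats containing exactly
   three markings (the flats contained in that cube are those with fixed
   coordinates a = k and b = m for some axis b <> a and m < n) *)
Definition cube_two_flats (n : nat) (qs : list quad) : Prop :=
  forall a k, (k < n)%nat ->
    length (filter (fun bm => Nat.eqb (length (flat_list qs a k (fst bm) (snd bm))) 3)
       (list_prod (filter (fun b => negb (axis_eqb a b)) all_axes) (seq 0 n)))
    = 2%nat.

(* The label of the vertex prescribed for a flat with fixed axes a1, a2:
   zw-flat (fixed x,y) -> W, wx-flat (fixed y,z) -> X, xy-flat (fixed z,w) -> Y,
   yz-flat (fixed w,x) -> Z; a wy-flat or zx-flat admits no vertex. *)
Definition flat_vertex_label (a1 a2 : axis) : option label :=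
  match a1, a2 with
  | AX, AY | AY, AX => Some LW
  | AY, AZ | AZ, AY => Some LX
  | AZ, AW | AW, AZ => Some LY
  | AW, AX | AX, AW => Some LZ
  | _, _ => None
  end.

(* in each flat containing exactly three markings, they form a right angle
   with rays parallel to the two full coordinate axes of the flat, and the
   vertex has the label prescribed by the type of the flat *)
Definition right_angles (n : nat) (qs : list quad) : Prop :=
  forall a1 k1 a2 k2, a1 <> a2 -> (k1 < n)%nat -> (k2 < n)%nat ->
    length (flat_list qs a1 k1 a2 k2) = 3%nat ->
    exists (v p q : label * pt) (f1 f2 : axis),
      Permutation (flat_list qs a1 k1 a2 k2) [v; p; q] /\
      f1 <> f2 /\ f1 <> a1 /\ f1 <> a2 /\ f2 <> a1 /\ f2 <> a2 /\
      differ_only (snd v) (snd p) f1 /\ differ_only (snd v) (snd q) f2 /\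
      flat_vertex_label a1 a2 = Some (fst v).

Definition marking_conditions (n : nat) (qs : list quad) : Prop :=
  in_grid n qs /\ cube_one_each n qs /\ cube_two_flats n qs /\ right_angles n qs.

(* A closed polygon in the (a,b)-plane, given by the cyclic list of its
   corners (nat pair (i,j) = point (i+1/2, j+1/2)). *)
Definition poly := list (nat * nat).

(* G_wy: corners W_i, X_i projected to (w,y) (X_i ~ Y_i, Z_i ~ W_(i+1)) *)
Definition poly_wy (qs : list quad) : poly :=
  flat_map (fun q => [(kw (qW q), ky (qW q)); (kw (qX q), ky (qX q))]) qs.

(* G_zx: corners W_i (~ X_i), Z_i (~ Y_i) projected to (z,x);
   the segment W_i -> Z_i is x-parallel, Z_i -> W_(i+1) is z-parallel *)
Definition poly_zx (qs : list quad) : poly :=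
  flat_map (fun q => [(kz (qW q), kx (qW q)); (kz (qZ q), kx (qZ q))]) qs.

Definition vtx (V : poly) (k : Z) : nat * nat :=
  nth (Z.to_nat (Z.modulo k (Z.of_nat (length V)))) V (0%nat, 0%nat).

Definition vtxR (V : poly) (k : Z) : R * R :=
  (INR (fst (vtx V k)) + / 2, INR (snd (vtx V k)) + / 2).

Definition edgeR (V : poly) (k : Z) : R * R :=
  (fst (vtxR V (k + 1)) - fst (vtxR V k), snd (vtxR V (k + 1)) - snd (vtxR V k)).

(* piecewise-linear parametrization, period length V, edge k on [k, k+1] *)
Definition pl (V : poly) (th : R) : R * R :=
  let k := Int_part th in
  let f := th - IZR k in
  (fst (vtxR V k) + f * fst (edgeR V k), snd (vtxR V k) + f * snd (edgeR V k)).

(* its derivative (defined away from the corners) *)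
Definition dpl (V : poly) (th : R) : R * R := edgeR V (Int_part th).

Definition pl_int (V : poly) (th0 th1 : R) : R :=
  RInt (fun th => snd (pl V th) * fst (dpl V th)) th0 th1.

Definition pl_crossing (V : poly) (th0 th1 : R) : Prop :=
  0 <= th0 < INR (length V) /\ 0 <= th1 < INR (length V) /\ th0 <> th1 /\
  pl V th0 = pl V th1.

Definition lagrangian_grid (V : poly) : Prop :=
  pl_int V 0 (INR (length V)) = 0 /\
  forall th0 th1, pl_crossing V th0 th1 -> pl_int V th0 th1 <> 0.

Definition lagrangian_hypercube (n : nat) (qs : list quad) : Prop :=
  is_curve qs /\ marking_conditions n qs /\
  lagrangian_grid (poly_wy qs) /\ lagrangian_grid (poly_zx qs) /\
  forall th0 th1 ph0 ph1,
    pl_crossing (poly_zx qs) th0 th1 -> pl_crossing (poly_wy qs) ph0 ph1 ->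
    Rabs (pl_int (poly_zx qs) th0 th1) <> Rabs (pl_int (poly_wy qs) ph0 ph1).

Definition vtxZ (V : poly) (k : Z) : Z * Z :=
  (Z.of_nat (fst (vtx V k)), Z.of_nat (snd (vtx V k))).

Definition edgeZ (V : poly) (k : Z) : Z * Z :=
  (fst (vtxZ V (k + 1)) - fst (vtxZ V k), snd (vtxZ V (k + 1)) - snd (vtxZ V k))%Z.

Definition turn (V : poly) (k : Z) : Z :=
  (fst (edgeZ V (k - 1)) * snd (edgeZ V k) - snd (edgeZ V (k - 1)) * fst (edgeZ V k))%Z.

Definition n_ccw (V : poly) : Z :=
  Z.of_nat (length (filter (fun k => Z.ltb 0 (turn V (Z.of_nat k))) (seq 0 (length V)))).
Definition n_cw (V : poly) : Z :=
  Z.of_nat (length (filter (fun k => Z.ltb (turn V (Z.of_nat k)) 0) (seq 0 (length V)))).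

(* w(G) = (#ccw corners - #cw corners) / 4  (an exact division) *)
Definition wG (V : poly) : Z := ((n_ccw V - n_cw V) / 4)%Z.

Definition d1 (g : R -> R * R) (t : R) : R := Derive (fun s => fst (g s)) t.
Definition d2 (g : R -> R * R) (t : R) : R := Derive (fun s => snd (g s)) t.

(* g : R -> R^2, 2pi-periodic, is a slight smoothing of the corners of the
   polygon V: g is a C^1 regular closed curve, reparametrizing the polygon
   (via a continuous nondecreasing degree-one h) except in eps-windows around
   the corners, eps-close to it, and whose velocity while the parameter h is on
   the (closed) edge k has positive component along that edge; moreover g
   still satisfies the Lagrangian conditions (1) and (2). *)
Definition smoothing (V : poly) (g : R -> R * R) : Prop :=
  (forall t, g (t + 2 * PI) = g t) /\
  (forall t, ex_derive (fun s => fst (g s)) t /\ ex_derive (fun s => snd (g s)) t) /\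
  (forall t, continuous (d1 g) t /\ continuous (d2 g) t) /\
  (forall t, (d1 g t, d2 g t) <> (0, 0)) /\
  (exists (h : R -> R) (eps : R),
     0 < eps < / 4 /\
     (forall t, continuous h t) /\
     (forall t1 t2, t1 <= t2 -> h t1 <= h t2) /\
     (forall t, h (t + 2 * PI) = h t + INR (length V)) /\
     (forall t, (fst (g t) - fst (pl V (h t))) ^ 2 + (snd (g t) - snd (pl V (h t))) ^ 2
                <= eps ^ 2) /\
     (forall t, (forall k : Z, eps <= Rabs (h t - IZR k)) -> g t = pl V (h t)) /\
     (forall t (k : Z), IZR k <= h t <= IZR k + 1 ->
        d1 g t * fst (edgeR V k) + d2 g t * snd (edgeR V k) > 0)) /\
  RInt (fun t => snd (g t) * d1 g t) 0 (2 * PI) = 0 /\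
  (forall t0 t1, 0 <= t0 < 2 * PI -> 0 <= t1 < 2 * PI -> t0 <> t1 -> g t0 = g t1 ->
     RInt (fun t => snd (g t) * d1 g t) t0 t1 <> 0).

Record pt4 : Type := P4 { cw : R; cx : R; cy : R; cz : R }.

(* i(s,u) = (w(u), x(s), y(u), z(s)) with gzx = (z,x), gwy = (w,y) *)
Definition torus_imm (gzx gwy : R -> R * R) (s u : R) : pt4 :=
  P4 (fst (gwy u)) (snd (gzx s)) (snd (gwy u)) (fst (gzx s)).

Definition partial_s (I : R -> R -> pt4) (s u : R) : pt4 :=
  P4 (Derive (fun s' => cw (I s' u)) s) (Derive (fun s' => cx (I s' u)) s)
     (Derive (fun s' => cy (I s' u)) s) (Derive (fun s' => cz (I s' u)) s).

Definition partial_u (I : R -> R -> pt4) (s u : R) : pt4 :=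
  P4 (Derive (fun u' => cw (I s u')) u) (Derive (fun u' => cx (I s u')) u)
     (Derive (fun u' => cy (I s u')) u) (Derive (fun u' => cz (I s u')) u).

(* Identify (R^4, dw/\dy + dz/\dx) with C^2 via (w + i y, z + i x). *)
Definition cw_of (v : pt4) : C := (cw v, cy v).
Definition cz_of (v : pt4) : C := (cz v, cx v).

(* For a Lagrangian plane spanned by the columns of the complex matrix A,
   det(A)^2/|det A|^2 = det(U)^2 where U is the unitary matrix whose columns
   are an orthonormal basis of the plane: the phase map of the Lagrangian
   Grassmannian, whose degree along a loop is the Maslov index. *)
Definition lag_phase (I : R -> R -> pt4) (p : R * R) : R * R :=
  let vs := partial_s I (fst p) (snd p) in
  let vu := partial_u I (fst p) (snd p) in
  let d := Cminus (Cmult (cw_of vs) (cz_of vu)) (Cmult (cw_of vu) (cz_of vs)) in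
  let d2' := Cmult d d in
  (fst d2' / (Cmod d) ^ 2, snd d2' / (Cmod d) ^ 2).

(* a loop in the torus (R/2piZ)^2, given by a lift c to the parameter plane *)
Definition torus_loop (c : R -> R * R) : Prop :=
  (forall t, continuous c t) /\
  exists p q : Z, c 1 = (fst (c 0) + 2 * PI * IZR p, snd (c 0) + 2 * PI * IZR q).

Definition maslov_index (I : R -> R -> pt4) (c : R -> R * R) (m : Z) : Prop :=
  exists phi : R -> R,
    (forall t, continuous phi t) /\
    (forall t, 0 <= t <= 1 -> lag_phase I (c t) = (cos (phi t), sin (phi t))) /\
    phi 1 - phi 0 = 2 * PI * IZR m.

(* N is the Maslov number: smallest positive Maslov index of a loop, or 0 if
   every loop has Maslov index 0.  Loops of the Legendrian lift L correspond to
   loops of the parameter torus (L is the graph of t over the torus). *)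
Definition is_maslov_number (I : R -> R -> pt4) (N : Z) : Prop :=
  ((0 < N)%Z /\ (exists c, torus_loop c /\ maslov_index I c N) /\
     (forall c m, torus_loop c -> maslov_index I c m -> (0 < m)%Z -> (N <= m)%Z))
  \/
  (N = 0%Z /\ forall c m, torus_loop c -> maslov_index I c m -> m = 0%Z).

(* Both projections are rectilinear polygons whose edges alternate between the
   two axis directions, so the direction of edge k is (a positive multiple of)
   e^{i Phi(k)} with Phi(k + 1) = Phi(k) + (pi/2) sgn(turn at corner k + 1);
   going once around, Phi increases by (pi/2)(#ccw - #cw) = 2 pi w(G).  The
   velocity of a smoothing g always has positive component along the edge it
   is following, so Phi(k) + atan(cross/dot) is a continuous argument theta of
   g' with theta(t + 2 pi) = theta(t) + 2 pi w(G).  For the torus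
   i(s,u) = (w(u), x(s), y(u), z(s)) the squared phase of the tangent plane at
   (s,u) is exp(i (2 theta_zx(s) + 2 theta_wy(u))), so a loop in the class
   (p,q) has Maslov index 2 (p w(G_zx) + q w(G_wy)).  Every such index is a
   multiple of 2 gcd, and a Bezout pair (p,q) realizes 2 gcd. *)
From Stdlib Require Import Reals ZArith List Lra Lia.
From Coquelicot Require Import Coquelicot.
Import ListNotations.
Open Scope R_scope.

Lemma cos_sin_sq x : cos x * cos x + sin x * sin x = 1.
Proof. pose proof (sin2_cos2 x). unfold Rsqr in *. lra. Qed.

Lemma cos_sin_eq_2PIZ x y : cos x = cos y -> sin x = sin y ->
  exists k : Z, x - y = 2 * PI * IZR k.
Proof.
  intros Hc Hs.
  assert (Hcos : cos (x - y) = 1) by (rewrite cos_minus, Hc, Hs; apply cos_sin_sq).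
  assert (Hsin : sin ((x - y) / 2) = 0).
  { replace (x - y) with (2 * ((x - y) / 2)) in Hcos by field.
    rewrite cos_2a_sin in Hcos. nra. }
  destruct (sin_eq_0_0 _ Hsin) as [k Hk]. exists k. lra.
Qed.

(* The value pi (2 min(a,b) + 1) lies strictly between 2 pi a and 2 pi b and
   is not in 2 pi Z, so by the intermediate value theorem f 0 = f 1. *)
Lemma continuous_2PIZ_valued_const (f : R -> R) :
  (forall t, continuous f t) ->
  (forall t, 0 <= t <= 1 -> exists j : Z, f t = 2 * PI * IZR j) -> f 1 = f 0.
Proof.
  intros Hc Hj.
  destruct (Hj 0) as [a Ha]; [lra|]. destruct (Hj 1) as [b Hb]; [lra|].
  destruct (Z.eq_dec a b) as [<-|Hab]; [congruence|]. exfalso.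
  pose proof PI_RGT_0.
  destruct (IVT_gen_consistent f 0 1 (PI * (2 * IZR (Z.min a b) + 1)) Hc) as [x [Hx Hfx]].
  { rewrite Ha, Hb. destruct (Z.lt_total a b) as [Hlt|[Heq|Hlt]]; [| congruence |].
    - assert (IZR a + 1 <= IZR b) by (rewrite <- plus_IZR; apply IZR_le; lia).
      rewrite Z.min_l, Rmin_left, Rmax_right by (lia || nra). split; nra.
    - assert (IZR b + 1 <= IZR a) by (rewrite <- plus_IZR; apply IZR_le; lia).
      rewrite Z.min_r, Rmin_right, Rmax_left by (lia || nra). split; nra. }
  rewrite Rmin_left, Rmax_right in Hx by lra.
  destruct (Hj x Hx) as [j Hfj].
  assert (Hodd : (2 * j = 2 * Z.min a b + 1)%Z).
  { apply eq_IZR. rewrite plus_IZR, !mult_IZR.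
    apply Rmult_eq_reg_l with PI; [simpl; lra | lra]. }
  lia.
Qed.

Lemma continuous_pos_locally (f : R -> R) t0 :
  continuous f t0 -> 0 < f t0 -> locally t0 (fun t => 0 < f t).
Proof.
  intros Hf Hpos. apply Hf.
  apply (locally_open (fun u => 0 < u)); [apply open_gt | auto | exact Hpos].
Qed.

Lemma continuous_fst_comp (c : R -> R * R) t :
  continuous c t -> continuous (fun s => fst (c s)) t.
Proof.
  intros H. apply (continuous_comp c fst); auto.
  rewrite (surjective_pairing (c t)). apply continuous_fst.
Qed.

Lemma continuous_snd_comp (c : R -> R * R) t :
  continuous c t -> continuous (fun s => snd (c s)) t.
Proof.
  intros H. apply (continuous_comp c snd); auto.
  rewrite (surjective_pairing (c t)). apply continuous_snd.
Qed.

Lemma continuous_pair (f g : R -> R) t :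
  continuous f t -> continuous g t -> continuous (fun s => (f s, g s)) t.
Proof.
  intros Hf Hg. apply (continuous_comp_2 f g pair); auto.
  apply (continuous_ext (fun z : R * R => z)); [intros [a b]; reflexivity | apply continuous_id].
Qed.

Lemma Derive_periodic (F : R -> R) T t :
  (forall s, F (s + T) = F s) -> ex_derive F (t + T) -> Derive F (t + T) = Derive F t.
Proof.
  intros Hp Hd.
  assert (H : Derive (fun s => F (s + T)) t = scal 1 (Derive F (t + T))).
  { apply is_derive_unique, (is_derive_comp F (fun s => s + T));
      [apply Derive_correct, Hd | auto_derive; [exact I | ring]]. }
  rewrite (Derive_ext _ F t Hp) in H. rewrite H.
  unfold scal; simpl; unfold mult; simpl. ring.
Qed.

Lemma Int_part_bounds x : IZR (Int_part x) <= x < IZR (Int_part x) + 1.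
Proof. pose proof (base_Int_part x). lra. Qed.

Lemma Int_part_unique x k : IZR k <= x < IZR k + 1 -> Int_part x = k.
Proof.
  intros [H1 H2]. pose proof (Int_part_bounds x) as [H3 H4].
  assert (k < Int_part x + 1)%Z by (apply lt_IZR; rewrite plus_IZR; simpl; lra).
  assert (Int_part x < k + 1)%Z by (apply lt_IZR; rewrite plus_IZR; simpl; lra).
  lia.
Qed.

Lemma Z_two_sided_ind (P : Z -> Prop) : P 0%Z -> (forall k, P k -> P (k + 1)%Z) ->
  (forall k, P (k + 1)%Z -> P k) -> forall k, P k.
Proof.
  intros H0 Hs Hp k. induction k using Z.peano_ind; auto.
  - rewrite <- Z.add_1_r. auto.
  - apply Hp. replace (Z.pred k + 1)%Z with k by lia. auto.
Qed.

(** * Turning numbers of closed polygons *)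

Definition sumZ (l : list Z) : Z := fold_right Z.add 0%Z l.

Lemma sumZ_app l1 l2 : sumZ (l1 ++ l2) = (sumZ l1 + sumZ l2)%Z.
Proof. induction l1; simpl; [lia | rewrite IHl1; lia]. Qed.

Lemma sumZ_shift (f : nat -> Z) n :
  sumZ (map (fun i => f (S i)) (seq 0 n)) = (sumZ (map f (seq 0 n)) + f n - f O)%Z.
Proof.
  induction n; [simpl; lia |].
  rewrite !seq_S, !map_app, !sumZ_app. simpl. rewrite IHn. lia.
Qed.

Lemma count_pos_sub_count_neg (f : nat -> Z) l :
  (Z.of_nat (length (filter (fun k => Z.ltb 0 (f k)) l)) -
   Z.of_nat (length (filter (fun k => Z.ltb (f k) 0) l)))%Z =
  sumZ (map (fun k => Z.sgn (f k)) l).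
Proof.
  induction l as [|a l IH]; simpl; [reflexivity |].
  destruct (Z.ltb_spec 0 (f a)); destruct (Z.ltb_spec (f a) 0); simpl length;
    rewrite <- IH; lia.
Qed.

Definition total_turning (V : poly) : Z :=
  sumZ (map (fun k => Z.sgn (turn V (Z.of_nat k))) (seq 0 (length V))).

Lemma n_ccw_sub_n_cw V : (n_ccw V - n_cw V)%Z = total_turning V.
Proof. apply (count_pos_sub_count_neg (fun k => turn V (Z.of_nat k))). Qed.

Lemma vtx_periodic V k : vtx V (k + Z.of_nat (length V)) = vtx V k.
Proof.
  unfold vtx. do 2 f_equal.
  replace (k + Z.of_nat (length V))%Z with (k + 1 * Z.of_nat (length V))%Z by lia.
  apply Z_mod_plus_full.
Qed.

Lemma edgeZ_periodic V k : edgeZ V (k + Z.of_nat (length V)) = edgeZ V k.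
Proof.
  unfold edgeZ, vtxZ.
  replace (k + Z.of_nat (length V) + 1)%Z with (k + 1 + Z.of_nat (length V))%Z by lia.
  rewrite !vtx_periodic. reflexivity.
Qed.

Lemma edgeR_periodic V k : edgeR V (k + Z.of_nat (length V)) = edgeR V k.
Proof.
  unfold edgeR, vtxR.
  replace (k + Z.of_nat (length V) + 1)%Z with (k + 1 + Z.of_nat (length V))%Z by lia.
  rewrite !vtx_periodic. reflexivity.
Qed.

Lemma turn_periodic V k : turn V (k + Z.of_nat (length V)) = turn V k.
Proof.
  unfold turn.
  replace (k + Z.of_nat (length V) - 1)%Z with (k - 1 + Z.of_nat (length V))%Z by lia.
  rewrite !edgeZ_periodic. reflexivity.
Qed.

Lemma edgeR_edgeZ V k :
  fst (edgeR V k) = IZR (fst (edgeZ V k)) /\ snd (edgeR V k) = IZR (snd (edgeZ V k)).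
Proof.
  unfold edgeR, edgeZ, vtxR, vtxZ; simpl.
  rewrite !minus_IZR, <- !INR_IZR_INZ. split; ring.
Qed.

Lemma turn_edgeR V k : IZR (turn V (k + 1)) =
  fst (edgeR V k) * snd (edgeR V (k + 1)) - snd (edgeR V k) * fst (edgeR V (k + 1)).
Proof.
  unfold turn. replace (k + 1 - 1)%Z with k by lia.
  destruct (edgeR_edgeZ V k) as [-> ->]. destruct (edgeR_edgeZ V (k + 1)) as [-> ->].
  rewrite minus_IZR, !mult_IZR. reflexivity.
Qed.

(* Turning accumulated at the corners 1, ..., k (for k >= 0), extended to
   negative k so that [partial_turning_succ] holds on all of Z. *)
Definition partial_turning (V : poly) (k : Z) : Z :=
  if (0 <=? k)%Z then
    sumZ (map (fun i => Z.sgn (turn V (Z.of_nat i + 1))) (seq 0 (Z.to_nat k)))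
  else (- sumZ (map (fun i => Z.sgn (turn V (- Z.of_nat i))) (seq 0 (Z.to_nat (- k)))))%Z.

Lemma partial_turning_succ V k :
  partial_turning V (k + 1) = (partial_turning V k + Z.sgn (turn V (k + 1)))%Z.
Proof.
  unfold partial_turning.
  destruct (Z.leb_spec 0 k).
  - rewrite (proj2 (Z.leb_le 0 (k + 1))) by lia.
    replace (Z.to_nat (k + 1)) with (S (Z.to_nat k)) by lia.
    rewrite seq_S, map_app, sumZ_app. simpl. rewrite Z2Nat.id by lia. lia.
  - destruct (Z.eq_dec k (-1)) as [->|Hk]; [simpl; lia |].
    rewrite (proj2 (Z.leb_gt 0 (k + 1))) by lia.
    replace (Z.to_nat (- k)) with (S (Z.to_nat (- (k + 1)))) by lia.
    rewrite seq_S, map_app, sumZ_app. simpl.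
    rewrite Z2Nat.id by lia. replace (- - (k + 1))%Z with (k + 1)%Z by lia. lia.
Qed.

Lemma partial_turning_periodic V k :
  partial_turning V (k + Z.of_nat (length V)) = (partial_turning V k + total_turning V)%Z.
Proof.
  induction k using Z_two_sided_ind.
  - unfold partial_turning. rewrite (proj2 (Z.leb_le 0 _)) by lia. simpl.
    rewrite Nat2Z.id. unfold total_turning.
    rewrite (map_ext _ (fun i => Z.sgn (turn V (Z.of_nat (S i)))))
      by (intros; rewrite Nat2Z.inj_succ; reflexivity).
    rewrite (sumZ_shift (fun i => Z.sgn (turn V (Z.of_nat i)))).
    rewrite <- (Z.add_0_l (Z.of_nat (length V))), turn_periodic. simpl. lia.
  - replace (k + 1 + Z.of_nat (length V))%Z with (k + Z.of_nat (length V) + 1)%Z by lia.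
    rewrite !partial_turning_succ, IHk.
    replace (k + Z.of_nat (length V) + 1)%Z with (k + 1 + Z.of_nat (length V))%Z by lia.
    rewrite turn_periodic. lia.
  - replace (k + 1 + Z.of_nat (length V))%Z with (k + Z.of_nat (length V) + 1)%Z in IHk by lia.
    rewrite !partial_turning_succ in IHk.
    replace (k + Z.of_nat (length V) + 1)%Z with (k + 1 + Z.of_nat (length V))%Z in IHk by lia.
    rewrite turn_periodic in IHk. lia.
Qed.

(** * The projections of a hypercube diagram are alternating rectilinear *)

Definition vertical (e : Z * Z) : Prop := fst e = 0%Z /\ snd e <> 0%Z.
Definition horizontal (e : Z * Z) : Prop := snd e = 0%Z /\ fst e <> 0%Z.

Definition alternating_rectilinear (V : poly) : Prop :=
  (0 < length V)%nat /\
  forall k, (vertical (edgeZ V k) /\ horizontal (edgeZ V (k + 1))) \/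
            (horizontal (edgeZ V k) /\ vertical (edgeZ V (k + 1))).

Definition interleave (f g : quad -> nat * nat) (qs : list quad) : poly :=
  flat_map (fun q => [f q; g q]) qs.

Section Interleave.
Variables (f g : quad -> nat * nat) (qs : list quad).

Lemma interleave_length : length (interleave f g qs) = (2 * length qs)%nat.
Proof. unfold interleave. induction qs; simpl; [reflexivity | rewrite IHl; lia]. Qed.

Lemma nth_interleave_even i d : (i < length qs)%nat ->
  nth (2 * i) (interleave f g qs) d = f (nth i qs dflt_quad).
Proof.
  unfold interleave. revert i; induction qs as [|q qs' IH]; intros i Hi; simpl in Hi; [lia |].
  destruct i; [reflexivity |].
  replace (2 * S i)%nat with (S (S (2 * i))) by lia. simpl. apply IH. lia.
Qed.

Lemma nth_interleave_odd i d : (i < length qs)%nat ->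
  nth (S (2 * i)) (interleave f g qs) d = g (nth i qs dflt_quad).
Proof.
  unfold interleave. revert i; induction qs as [|q qs' IH]; intros i Hi; simpl in Hi; [lia |].
  destruct i; [reflexivity |].
  replace (S (2 * S i))%nat with (S (S (S (2 * i)))) by lia. simpl. apply IH. lia.
Qed.

Hypothesis qs_nonempty : (0 < length qs)%nat.
Let V := interleave f g qs.

Lemma interleave_mod_cases k : exists i, (i < length qs)%nat /\
  ((k mod Z.of_nat (length V))%Z = Z.of_nat (2 * i) \/
   (k mod Z.of_nat (length V))%Z = Z.of_nat (S (2 * i))).
Proof.
  unfold V. rewrite interleave_length.
  pose proof (Z.mod_pos_bound k (Z.of_nat (2 * length qs)) ltac:(lia)) as B.
  set (r := (k mod Z.of_nat (2 * length qs))%Z) in *.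
  exists (Z.to_nat r / 2)%nat.
  pose proof (Nat.div_mod (Z.to_nat r) 2 ltac:(lia)).
  pose proof (Nat.mod_upper_bound (Z.to_nat r) 2 ltac:(lia)).
  split; [lia |].
  destruct (Z.to_nat r mod 2)%nat as [|[|]]; [left | right | lia]; lia.
Qed.

Lemma vtx_of_mod k j : (k mod Z.of_nat (length V))%Z = Z.of_nat j ->
  vtx V k = nth j V (0%nat, 0%nat).
Proof. intros H. unfold vtx. rewrite H, Nat2Z.id. reflexivity. Qed.

Lemma mod_succ k j : (k mod Z.of_nat (length V))%Z = Z.of_nat j ->
  ((k + 1) mod Z.of_nat (length V))%Z = Z.of_nat (S j mod length V).
Proof.
  intros H. rewrite Nat2Z.inj_mod, <- Zplus_mod_idemp_l, H. f_equal. lia.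
Qed.

Lemma interleave_step_even k i : (i < length qs)%nat ->
  (k mod Z.of_nat (length V))%Z = Z.of_nat (2 * i) ->
  vtx V k = f (nth i qs dflt_quad) /\ vtx V (k + 1) = g (nth i qs dflt_quad) /\
  ((k + 1) mod Z.of_nat (length V))%Z = Z.of_nat (S (2 * i)).
Proof.
  intros Hi H.
  assert (H1 : ((k + 1) mod Z.of_nat (length V))%Z = Z.of_nat (S (2 * i))).
  { rewrite (mod_succ _ _ H). f_equal. apply Nat.mod_small.
    unfold V. rewrite interleave_length. lia. }
  split; [| split; [| exact H1]].
  - rewrite (vtx_of_mod _ _ H). apply nth_interleave_even, Hi.
  - rewrite (vtx_of_mod _ _ H1). apply nth_interleave_odd, Hi.
Qed.

Lemma interleave_step_odd k i : (i < length qs)%nat ->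
  (k mod Z.of_nat (length V))%Z = Z.of_nat (S (2 * i)) ->
  vtx V k = g (nth i qs dflt_quad) /\
  vtx V (k + 1) = f (nth ((i + 1) mod length qs) qs dflt_quad) /\
  ((k + 1) mod Z.of_nat (length V))%Z = Z.of_nat (2 * ((i + 1) mod length qs)).
Proof.
  intros Hi H.
  assert (H1 : ((k + 1) mod Z.of_nat (length V))%Z = Z.of_nat (2 * ((i + 1) mod length qs))).
  { rewrite (mod_succ _ _ H). f_equal. unfold V. rewrite interleave_length.
    replace (S (S (2 * i))) with (2 * (i + 1))%nat by lia.
    apply Nat.Div0.mul_mod_distr_l. }
  split; [| split; [| exact H1]].
  - rewrite (vtx_of_mod _ _ H). apply nth_interleave_odd, Hi.
  - rewrite (vtx_of_mod _ _ H1). apply nth_interleave_even, Nat.mod_upper_bound. lia.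
Qed.

Definition grid_displacement (u v : nat * nat) : Z * Z :=
  (Z.of_nat (fst v) - Z.of_nat (fst u), Z.of_nat (snd v) - Z.of_nat (snd u))%Z.

Lemma interleave_edges (PA PB : Z * Z -> Prop) :
  (forall i, (i < length qs)%nat ->
     PA (grid_displacement (f (nth i qs dflt_quad)) (g (nth i qs dflt_quad))) /\
     PB (grid_displacement (g (nth i qs dflt_quad))
                   (f (nth ((i + 1) mod length qs) qs dflt_quad)))) ->
  forall k, (PA (edgeZ V k) /\ PB (edgeZ V (k + 1))) \/
            (PB (edgeZ V k) /\ PA (edgeZ V (k + 1))).
Proof.
  intros HP k.
  destruct (interleave_mod_cases k) as [i [Hi [Hr|Hr]]].
  - left. destruct (interleave_step_even k i Hi Hr) as [E1 [E2 E3]].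
    destruct (interleave_step_odd (k + 1) i Hi E3) as [_ [F2 _]].
    destruct (HP i Hi) as [HA HB]. unfold edgeZ, vtxZ.
    rewrite E1, E2, F2. split; [exact HA | exact HB].
  - right. destruct (interleave_step_odd k i Hi Hr) as [E1 [E2 E3]].
    assert (Hi' : ((i + 1) mod length qs < length qs)%nat)
      by (apply Nat.mod_upper_bound; lia).
    destruct (interleave_step_even (k + 1) _ Hi' E3) as [_ [F2 _]].
    unfold edgeZ, vtxZ. rewrite E1, E2, F2.
    split; [apply (HP i Hi) | apply (HP _ Hi')].
Qed.

End Interleave.

Lemma is_curve_coords qs i : is_curve qs -> (i < length qs)%nat ->
  let q := nth i qs dflt_quad in
  let q' := nth ((i + 1) mod length qs) qs dflt_quad in
  kz (qW q) = kz (qZ q) /\ kx (qW q) <> kx (qZ q) /\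
  kx (qZ q) = kx (qW q') /\ kz (qZ q) <> kz (qW q') /\
  kw (qW q) <> kw (qX q) /\ ky (qW q) = ky (qX q) /\
  kw (qX q) = kw (qW q') /\ ky (qX q) <> ky (qW q').
Proof.
  intros [_ Hc] Hi q q'.
  destruct (Hc i Hi) as [[A1 A2] [[B1 B2] [[C1 C2] [D1 D2]]]].
  fold q q' in A1, A2, B1, B2, C1, C2, D1, D2.
  pose proof (A2 AX ltac:(discriminate)). pose proof (A2 AY ltac:(discriminate)).
  pose proof (A2 AZ ltac:(discriminate)). pose proof (B2 AW ltac:(discriminate)).
  pose proof (B2 AY ltac:(discriminate)). pose proof (B2 AZ ltac:(discriminate)).
  pose proof (C2 AW ltac:(discriminate)). pose proof (C2 AX ltac:(discriminate)).
  pose proof (C2 AZ ltac:(discriminate)). pose proof (D2 AW ltac:(discriminate)).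
  pose proof (D2 AX ltac:(discriminate)). pose proof (D2 AY ltac:(discriminate)).
  simpl in *. repeat split; lia.
Qed.

Lemma poly_zx_alternating qs : is_curve qs -> alternating_rectilinear (poly_zx qs).
Proof.
  intros Hc. assert (Hl : (0 < length qs)%nat) by apply Hc.
  change (poly_zx qs) with
    (interleave (fun q => (kz (qW q), kx (qW q))) (fun q => (kz (qZ q), kx (qZ q))) qs).
  split; [rewrite interleave_length; lia |].
  apply interleave_edges; [exact Hl |].
  intros i Hi. destruct (is_curve_coords qs i Hc Hi) as [F1 [F2 [F3 [F4 _]]]].
  unfold vertical, horizontal; simpl. repeat split; lia.
Qed.

Lemma poly_wy_alternating qs : is_curve qs -> alternating_rectilinear (poly_wy qs).
Proof.
  intros Hc. assert (Hl : (0 < length qs)%nat) by apply Hc.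
  change (poly_wy qs) with
    (interleave (fun q => (kw (qW q), ky (qW q))) (fun q => (kw (qX q), ky (qX q))) qs).
  split; [rewrite interleave_length; lia |].
  intros k. apply or_comm, (interleave_edges _ _ _ Hl horizontal vertical).
  intros i Hi. destruct (is_curve_coords qs i Hc Hi) as [_ [_ [_ [_ [F1 [F2 [F3 F4]]]]]]].
  unfold vertical, horizontal; simpl. repeat split; lia.
Qed.

(** * Direction angles of the edges *)

Lemma alternating_edges V : alternating_rectilinear V -> forall k,
  fst (edgeR V k) * fst (edgeR V (k + 1)) + snd (edgeR V k) * snd (edgeR V (k + 1)) = 0 /\
  (fst (edgeR V k) <> 0 \/ snd (edgeR V k) <> 0).
Proof.
  intros [_ HV] k.
  destruct (edgeR_edgeZ V k) as [-> ->]. destruct (edgeR_edgeZ V (k + 1)) as [-> ->].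
  destruct (HV k) as [[[A1 A2] [B1 B2]] | [[A1 A2] [B1 B2]]]; rewrite A1, B1.
  - split; [simpl; ring | right; intro H; apply A2, eq_IZR, H].
  - split; [simpl; ring | left; intro H; apply A2, eq_IZR, H].
Qed.

Lemma edge0_polar V : alternating_rectilinear V -> exists p0 c, 0 < c /\
  fst (edgeR V 0) = c * cos p0 /\ snd (edgeR V 0) = c * sin p0.
Proof.
  intros HV. destruct (alternating_edges V HV 0) as [_ Hnz].
  destruct (edgeR_edgeZ V 0) as [Ex Ey].
  destruct HV as [_ HV]. destruct (HV 0%Z) as [[[A1 _] _] | [[A1 _] _]].
  - rewrite A1 in Ex. destruct Hnz as [Hnz | Hnz]; [contradiction |].
    destruct (Rlt_or_le 0 (snd (edgeR V 0))).
    + exists (PI / 2), (snd (edgeR V 0)). rewrite cos_PI2, sin_PI2. repeat split; lra.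
    + exists (- (PI / 2)), (- snd (edgeR V 0)).
      rewrite cos_neg, sin_neg, cos_PI2, sin_PI2. repeat split; lra.
  - rewrite A1 in Ey. destruct Hnz as [Hnz | Hnz]; [| contradiction].
    destruct (Rlt_or_le 0 (fst (edgeR V 0))).
    + exists 0, (fst (edgeR V 0)). rewrite cos_0, sin_0. repeat split; lra.
    + exists PI, (- fst (edgeR V 0)). rewrite cos_PI, sin_PI. repeat split; lra.
Qed.

Lemma orthogonal_quarter_turn (c phi x y : R) (T : Z) : 0 < c ->
  c * cos phi * x + c * sin phi * y = 0 -> (x <> 0 \/ y <> 0) ->
  IZR T = c * cos phi * y - c * sin phi * x ->
  exists c', 0 < c' /\ x = c' * cos (phi + PI / 2 * IZR (Z.sgn T)) /\
                       y = c' * sin (phi + PI / 2 * IZR (Z.sgn T)).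
Proof.
  intros Hc Hp Hnz HT.
  set (C := cos phi) in *. set (S := sin phi) in *.
  assert (HCS : C * C + S * S = 1) by apply cos_sin_sq.
  set (l := C * y - S * x).
  assert (Hp' : C * x + S * y = 0) by (apply Rmult_eq_reg_l with c; lra).
  assert (Ex : x = - S * l).
  { unfold l. transitivity (x * (C * C + S * S) - C * (C * x + S * y));
      [rewrite HCS, Hp'; ring | ring]. }
  assert (Ey : y = C * l).
  { unfold l. transitivity (y * (C * C + S * S) - S * (C * x + S * y));
      [rewrite HCS, Hp'; ring | ring]. }
  assert (HT' : IZR T = c * l) by (rewrite HT; unfold l; ring).
  destruct (Rtotal_order l 0) as [Hl | [Hl | Hl]].
  - assert (T < 0)%Z by (apply lt_IZR; rewrite HT'; nra).
    rewrite Z.sgn_neg by assumption.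
    exists (- l). split; [lra |].
    replace (phi + PI / 2 * IZR (-1)) with (phi - PI / 2) by (simpl; ring).
    rewrite cos_minus, sin_minus, cos_PI2, sin_PI2. fold C S. split; nra.
  - exfalso. rewrite Hl in Ex, Ey. destruct Hnz; lra.
  - assert (0 < T)%Z by (apply lt_IZR; rewrite HT'; nra).
    rewrite Z.sgn_pos by assumption.
    exists l. split; [lra |].
    replace (phi + PI / 2 * IZR 1) with (phi + PI / 2) by (simpl; ring).
    rewrite cos_plus, sin_plus, cos_PI2, sin_PI2. fold C S. split; nra.
Qed.

Section EdgeAngle.
Variable V : poly.
Hypothesis V_alternating : alternating_rectilinear V.
Variable p0 : R.
Hypothesis edge0_direction :
  exists c, 0 < c /\ fst (edgeR V 0) = c * cos p0 /\ snd (edgeR V 0) = c * sin p0.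

Definition edge_angle (k : Z) : R := PI / 2 * IZR (partial_turning V k) + p0.

Definition edge_direction (k : Z) : Prop := exists c, 0 < c /\
  fst (edgeR V k) = c * cos (edge_angle k) /\ snd (edgeR V k) = c * sin (edge_angle k).

Lemma edge_angle_succ k :
  edge_angle (k + 1) = edge_angle k + PI / 2 * IZR (Z.sgn (turn V (k + 1))).
Proof. unfold edge_angle. rewrite partial_turning_succ, plus_IZR. ring. Qed.

Lemma edge_direction_all : forall k, edge_direction k.
Proof.
  apply Z_two_sided_ind.
  - unfold edge_direction, edge_angle.
    replace (PI / 2 * IZR (partial_turning V 0) + p0) with p0 by (cbn; ring).
    exact edge0_direction.
  - intros k [c [Hc [H1 H2]]].
    destruct (alternating_edges V V_alternating k) as [Hp _].
    destruct (alternating_edges V V_alternating (k + 1)) as [_ Hnz].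
    destruct (orthogonal_quarter_turn c (edge_angle k) (fst (edgeR V (k + 1)))
                (snd (edgeR V (k + 1))) (turn V (k + 1)) Hc) as [c' [Hc' [E1 E2]]].
    + rewrite <- H1, <- H2. exact Hp.
    + exact Hnz.
    + rewrite turn_edgeR, H1, H2. ring.
    + exists c'. rewrite edge_angle_succ. auto.
  - intros k [c [Hc [H1 H2]]].
    destruct (alternating_edges V V_alternating k) as [Hp Hnz].
    destruct (orthogonal_quarter_turn c (edge_angle (k + 1)) (fst (edgeR V k))
                (snd (edgeR V k)) (- turn V (k + 1)) Hc) as [c' [Hc' [E1 E2]]].
    + rewrite <- H1, <- H2. lra.
    + exact Hnz.
    + rewrite opp_IZR, turn_edgeR, H1, H2. ring.
    + exists c'. rewrite edge_angle_succ, Z.sgn_opp, opp_IZR in E1, E2.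
      replace (edge_angle k + PI / 2 * IZR (Z.sgn (turn V (k + 1)))
               + PI / 2 * - IZR (Z.sgn (turn V (k + 1)))) with (edge_angle k) in E1, E2
        by ring.
      auto.
Qed.

(* Edge 0 and edge (length V) coincide, so their angles differ by a multiple of 2 pi. *)
Lemma total_turning_div4 : exists j, total_turning V = (4 * j)%Z.
Proof.
  destruct edge0_direction as [c0 [Hc0 [A1 A2]]].
  destruct (edge_direction_all (0 + Z.of_nat (length V))) as [c1 [Hc1 [B1 B2]]].
  unfold edge_angle in B1, B2.
  rewrite edgeR_periodic, partial_turning_periodic in B1, B2.
  change (partial_turning V 0) with 0%Z in B1, B2.
  set (x := PI / 2 * IZR (0 + total_turning V) + p0) in *.
  assert (Hcc : c1 = c0).
  { pose proof (cos_sin_sq x). pose proof (cos_sin_sq p0).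
    assert (c1 * c1 = c0 * c0); [| nra].
    transitivity ((c1 * cos x) ^ 2 + (c1 * sin x) ^ 2); [nra |].
    rewrite <- B1, <- B2, A1, A2. nra. }
  subst c1.
  destruct (cos_sin_eq_2PIZ x p0) as [j Hj];
    [apply Rmult_eq_reg_l with c0; lra | apply Rmult_eq_reg_l with c0; lra |].
  exists j. apply eq_IZR. rewrite mult_IZR. unfold x in Hj. rewrite Z.add_0_l in Hj.
  pose proof PI_RGT_0. apply Rmult_eq_reg_l with (PI / 2); [simpl; lra | lra].
Qed.

Lemma total_turning_wG : total_turning V = (4 * wG V)%Z.
Proof.
  destruct total_turning_div4 as [j Hj]. unfold wG.
  rewrite n_ccw_sub_n_cw, Hj, Z.mul_comm, Z.div_mul by lia. lia.
Qed.

Definition edge_dot k a b := fst (edgeR V k) * a + snd (edgeR V k) * b.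
Definition edge_cross k a b := fst (edgeR V k) * b - snd (edgeR V k) * a.

(* An argument of the vector (a, b), correct whenever (a, b) makes an acute
   angle with edge k. *)
Definition vector_angle k a b := edge_angle k + atan (edge_cross k a b / edge_dot k a b).

Lemma vector_angle_polar k a b : 0 < edge_dot k a b ->
  cos (vector_angle k a b) * sqrt (a * a + b * b) = a /\
  sin (vector_angle k a b) * sqrt (a * a + b * b) = b.
Proof.
  intros Hd. destruct (edge_direction_all k) as [c [Hc [H1 H2]]].
  unfold vector_angle, edge_dot, edge_cross in *. rewrite H1, H2 in *.
  set (C := cos (edge_angle k)) in *. set (S := sin (edge_angle k)) in *.
  assert (HCS : C * C + S * S = 1) by apply cos_sin_sq.
  set (r := sqrt (a * a + b * b)).
  assert (Hab : 0 < a * a + b * b)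
    by (destruct (Req_dec a 0); destruct (Req_dec b 0); subst; nra).
  assert (Hr : 0 < r) by (apply sqrt_lt_R0; exact Hab).
  assert (Hr2 : r * r = a * a + b * b) by (apply sqrt_sqrt; lra).
  set (dt := c * C * a + c * S * b) in *.
  set (cr := c * C * b - c * S * a).
  assert (Hsq : sqrt (1 + (cr / dt)²) = c * r / dt).
  { rewrite <- (sqrt_Rsqr (c * r / dt)) by (apply Rlt_le, Rdiv_lt_0_compat; nra).
    f_equal. unfold Rsqr. field_simplify_eq; [| lra].
    transitivity (c * c * (C * C + S * S) * (a * a + b * b)); [unfold cr, dt; ring |].
    rewrite HCS, <- Hr2. ring. }
  assert (K1 : C * dt - S * cr = c * a).
  { unfold dt, cr. transitivity (c * a * (C * C + S * S)); [ring | rewrite HCS; ring]. }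
  assert (K2 : S * dt + C * cr = c * b).
  { unfold dt, cr. transitivity (c * b * (C * C + S * S)); [ring | rewrite HCS; ring]. }
  rewrite cos_plus, sin_plus, cos_atan, sin_atan, Hsq. fold C S.
  split.
  - replace (C * (1 / (c * r / dt)) - S * (cr / dt / (c * r / dt)))
      with ((C * dt - S * cr) / (c * r)) by (field; repeat split; lra).
    rewrite K1. field. lra.
  - replace (S * (1 / (c * r / dt)) + C * (cr / dt / (c * r / dt)))
      with ((S * dt + C * cr) / (c * r)) by (field; repeat split; lra).
    rewrite K2. field. lra.
Qed.

(* Both are arguments of (a, b), and their difference lies strictly between
   -2 pi and 2 pi (two atan terms and a quarter turn). *)
Lemma vector_angle_succ k a b : 0 < edge_dot k a b -> 0 < edge_dot (k + 1) a b ->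
  vector_angle k a b = vector_angle (k + 1) a b.
Proof.
  intros H1 H2.
  destruct (vector_angle_polar k a b H1) as [A1 A2].
  destruct (vector_angle_polar (k + 1) a b H2) as [B1 B2].
  assert (Hab : 0 < a * a + b * b).
  { unfold edge_dot in H1. destruct (Req_dec a 0); destruct (Req_dec b 0); subst; nra. }
  assert (Hr : 0 < sqrt (a * a + b * b)) by (apply sqrt_lt_R0; exact Hab).
  destruct (cos_sin_eq_2PIZ (vector_angle (k + 1) a b) (vector_angle k a b)) as [j Hj];
    [apply Rmult_eq_reg_r with (sqrt (a * a + b * b)); lra
    | apply Rmult_eq_reg_r with (sqrt (a * a + b * b)); lra |].
  unfold vector_angle in Hj. rewrite edge_angle_succ in Hj.
  pose proof (atan_bound (edge_cross k a b / edge_dot k a b)).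
  pose proof (atan_bound (edge_cross (k + 1) a b / edge_dot (k + 1) a b)).
  pose proof PI_RGT_0.
  assert (Hsg : -1 <= IZR (Z.sgn (turn V (k + 1))) <= 1)
    by (split; apply IZR_le; destruct (turn V (k + 1)); simpl; lia).
  assert (j = 0%Z).
  { destruct (Z.lt_total j 0) as [Hl | [Hl | Hl]]; auto; exfalso.
    - assert (IZR j <= -1) by (apply IZR_le; lia). nra.
    - assert (1 <= IZR j) by (apply IZR_le; lia). nra. }
  subst j. unfold vector_angle. rewrite edge_angle_succ. lra.
Qed.

Lemma vector_angle_periodic k a b :
  vector_angle (k + Z.of_nat (length V)) a b = vector_angle k a b + 2 * PI * IZR (wG V).
Proof.
  unfold vector_angle, edge_angle, edge_dot, edge_cross.
  rewrite !edgeR_periodic, partial_turning_periodic, plus_IZR, total_turning_wG, mult_IZR.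
  simpl (IZR 4). field.
Qed.

Lemma continuous_edge_dot (f1 f2 : R -> R) k t :
  continuous f1 t -> continuous f2 t -> continuous (fun s => edge_dot k (f1 s) (f2 s)) t.
Proof.
  intros H1 H2. unfold edge_dot.
  apply @continuous_plus; apply @continuous_mult; auto; apply continuous_const.
Qed.

Lemma continuous_vector_angle (f1 f2 : R -> R) k t :
  continuous f1 t -> continuous f2 t -> edge_dot k (f1 t) (f2 t) <> 0 ->
  continuous (fun s => vector_angle k (f1 s) (f2 s)) t.
Proof.
  intros H1 H2 Hd. unfold vector_angle.
  apply @continuous_plus; [apply continuous_const |]. apply continuous_atan_comp.
  apply @continuous_mult; [| apply continuous_Rinv_comp; [apply continuous_edge_dot; auto | exact Hd]].
  unfold edge_cross.
  apply @continuous_minus; apply @continuous_mult; auto; apply continuous_const.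
Qed.

(** * The tangent angle of a smoothing *)

Variables (g : R -> R * R) (h : R -> R).
Hypothesis h_continuous : forall t, continuous h t.
Hypothesis h_periodic : forall t, h (t + 2 * PI) = h t + INR (length V).
Hypothesis g_along_edge : forall t (k : Z), IZR k <= h t <= IZR k + 1 ->
  d1 g t * fst (edgeR V k) + d2 g t * snd (edgeR V k) > 0.
Hypothesis g_periodic : forall t, g (t + 2 * PI) = g t.
Hypothesis g_derivable :
  forall t, ex_derive (fun s => fst (g s)) t /\ ex_derive (fun s => snd (g s)) t.
Hypothesis g_C1 : forall t, continuous (d1 g) t /\ continuous (d2 g) t.

Definition tangent_angle (t : R) : R := vector_angle (Int_part (h t)) (d1 g t) (d2 g t).

Lemma velocity_along_edge t k : IZR k <= h t <= IZR k + 1 ->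
  0 < edge_dot k (d1 g t) (d2 g t).
Proof. intros H. specialize (g_along_edge t k H). unfold edge_dot. lra. Qed.

Lemma tangent_angle_polar t :
  cos (tangent_angle t) * sqrt (d1 g t * d1 g t + d2 g t * d2 g t) = d1 g t /\
  sin (tangent_angle t) * sqrt (d1 g t * d1 g t + d2 g t * d2 g t) = d2 g t.
Proof.
  apply vector_angle_polar, velocity_along_edge.
  pose proof (Int_part_bounds (h t)). lra.
Qed.

(* Near t0, [tangent_angle] agrees with [vector_angle k] for k = floor (h t0):
   either h stays in (k, k + 1), or h t0 = k and the angles for k - 1 and k
   coincide where h < k. *)
Lemma continuous_tangent_angle t0 : continuous tangent_angle t0.
Proof.
  set (k := Int_part (h t0)). pose proof (Int_part_bounds (h t0)) as [F1 F2]. fold k in F1, F2.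
  destruct (g_C1 t0) as [C1 C2].
  assert (Hdot : 0 < edge_dot k (d1 g t0) (d2 g t0)) by (apply velocity_along_edge; lra).
  apply (continuous_ext_loc _ (fun s => vector_angle k (d1 g s) (d2 g s)));
    [| apply continuous_vector_angle; auto; lra].
  assert (Hup : locally t0 (fun t => h t < IZR k + 1)).
  { apply (filter_imp (fun t => 0 < IZR k + 1 - h t)); [intros; lra |].
    apply continuous_pos_locally; [| lra].
    apply @continuous_minus; [apply continuous_const | apply h_continuous]. }
  destruct (Rle_lt_or_eq_dec _ _ F1) as [Hlt | Heq].
  - assert (Hdown : locally t0 (fun t => IZR k < h t)).
    { apply (filter_imp (fun t => 0 < h t - IZR k)); [intros; lra |].
      apply continuous_pos_locally; [| lra].
      apply @continuous_minus; [apply h_continuous | apply continuous_const]. }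
    refine (filter_imp _ _ _ (filter_and _ _ Hup Hdown)). intros t Ht.
    unfold tangent_angle. rewrite (Int_part_unique (h t) k) by lra. reflexivity.
  - assert (Hdown : locally t0 (fun t => IZR k - 1 < h t)).
    { apply (filter_imp (fun t => 0 < h t - (IZR k - 1))); [intros; lra |].
      apply continuous_pos_locally; [| lra].
      apply @continuous_minus; [apply h_continuous | apply continuous_const]. }
    assert (Hdot_near : locally t0 (fun t => 0 < edge_dot k (d1 g t) (d2 g t)))
      by (apply continuous_pos_locally; [apply continuous_edge_dot |]; auto).
    refine (filter_imp _ _ _ (filter_and _ _ Hup (filter_and _ _ Hdown Hdot_near))).
    intros t [Ht1 [Ht2 Ht3]]. unfold tangent_angle.
    destruct (Rle_or_lt (IZR k) (h t)) as [Hk | Hk].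
    + rewrite (Int_part_unique (h t) k) by lra. reflexivity.
    + rewrite (Int_part_unique (h t) (k - 1)) by (rewrite minus_IZR; simpl; lra).
      symmetry. replace k with (k - 1 + 1)%Z at 2 by lia.
      apply vector_angle_succ; [apply velocity_along_edge; rewrite minus_IZR; simpl; lra |].
      replace (k - 1 + 1)%Z with k by lia. exact Ht3.
Qed.

Lemma tangent_angle_periodic t : tangent_angle (t + 2 * PI) = tangent_angle t + 2 * PI * IZR (wG V).
Proof.
  unfold tangent_angle, d1, d2.
  rewrite !(Derive_periodic _ (2 * PI) t) by
    (intros; rewrite ?g_periodic; reflexivity || apply g_derivable).
  rewrite h_periodic.
  rewrite (Int_part_unique (h t + INR (length V)) (Int_part (h t) + Z.of_nat (length V))).
  - apply vector_angle_periodic.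
  - pose proof (Int_part_bounds (h t)). rewrite plus_IZR, <- INR_IZR_INZ. lra.
Qed.

End EdgeAngle.

Lemma tangent_angle_exists V g : alternating_rectilinear V -> smoothing V g ->
  exists th : R -> R, (forall t, continuous th t) /\
    (forall t, cos (th t) * sqrt (d1 g t * d1 g t + d2 g t * d2 g t) = d1 g t /\
               sin (th t) * sqrt (d1 g t * d1 g t + d2 g t * d2 g t) = d2 g t) /\
    (forall t, th (t + 2 * PI) = th t + 2 * PI * IZR (wG V)).
Proof.
  intros HV [Hgp [Hgd [Hgc [_ [[h [_ [_ [Hhc [_ [Hhp [_ [_ Hdir]]]]]]]] _]]]]].
  destruct (edge0_polar V HV) as [p0 Hp0].
  exists (tangent_angle V p0 g h).
  split; [| split]; intros t.
  - apply (continuous_tangent_angle V HV p0 Hp0 g h Hhc Hdir Hgc).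
  - apply (tangent_angle_polar V HV p0 Hp0 g h Hdir).
  - apply (tangent_angle_periodic V HV p0 Hp0 g h Hhp Hgp Hgd).
Qed.

(** * The Lagrangian phase of the torus *)

(* The determinant in [lag_phase] for i(s,u): the zero factors are d/ds of
   (w, y) and d/du of (z, x). *)
Lemma lag_phase_product_polar (w y z x a b rA rB : R) : 0 < rA -> 0 < rB ->
  cos a * rA = w -> sin a * rA = y -> cos b * rB = z -> sin b * rB = x ->
  let d := Cminus (Cmult (0, 0) (0, 0)) (Cmult (w, y) (z, x)) in
  let d2 := Cmult d d in
  (fst d2 / Cmod d ^ 2, snd d2 / Cmod d ^ 2) = (cos (2 * b + 2 * a), sin (2 * b + 2 * a)).
Proof.
  intros HA HB <- <- <- <- d d2.
  pose proof (cos_sin_sq a) as Ha. pose proof (cos_sin_sq b) as Hb.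
  assert (Hm : Cmod d ^ 2 = rA ^ 2 * rB ^ 2).
  { rewrite Cmod2_alt. unfold d, Cminus, Cplus, Copp, Cmult, Re, Im; simpl.
    transitivity (rA ^ 2 * rB ^ 2 * (cos a * cos a + sin a * sin a)
                  * (cos b * cos b + sin b * sin b)); [ring |].
    rewrite Ha, Hb. ring. }
  rewrite Hm. unfold d2, d, Cminus, Cplus, Copp, Cmult; simpl.
  rewrite cos_plus, sin_plus, !cos_2a, !sin_2a.
  f_equal; field; split; lra.
Qed.

Lemma velocity_norm_pos (g : R -> R * R) t :
  (d1 g t, d2 g t) <> (0, 0) -> 0 < sqrt (d1 g t * d1 g t + d2 g t * d2 g t).
Proof.
  intros Hnz. apply sqrt_lt_R0.
  destruct (Req_dec (d1 g t) 0) as [E | E]; [| nra].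
  destruct (Req_dec (d2 g t) 0) as [E' | E']; [| nra].
  exfalso. apply Hnz. rewrite E, E'. reflexivity.
Qed.

Lemma quasi_periodic_iter (th : R -> R) (w : Z) :
  (forall t, th (t + 2 * PI) = th t + 2 * PI * IZR w) ->
  forall x (p : Z), th (x + 2 * PI * IZR p) = th x + 2 * PI * IZR p * IZR w.
Proof.
  intros Hp x p. induction p using Z_two_sided_ind.
  - rewrite !Rmult_0_r, Rplus_0_r, Rmult_0_l, Rplus_0_r. reflexivity.
  - rewrite plus_IZR.
    replace (x + 2 * PI * (IZR p + 1)) with (x + 2 * PI * IZR p + 2 * PI) by ring.
    rewrite Hp, IHp. ring.
  - rewrite plus_IZR in IHp.
    replace (x + 2 * PI * (IZR p + 1)) with (x + 2 * PI * IZR p + 2 * PI) in IHp by ring.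
    rewrite Hp in IHp. lra.
Qed.

Section Torus.
Variables (gzx gwy : R -> R * R) (thzx thwy : R -> R) (wzx wwy : Z).
Hypothesis zx_regular : forall s, (d1 gzx s, d2 gzx s) <> (0, 0).
Hypothesis wy_regular : forall u, (d1 gwy u, d2 gwy u) <> (0, 0).
Hypothesis thzx_continuous : forall s, continuous thzx s.
Hypothesis thwy_continuous : forall u, continuous thwy u.
Hypothesis thzx_polar : forall s,
  cos (thzx s) * sqrt (d1 gzx s * d1 gzx s + d2 gzx s * d2 gzx s) = d1 gzx s /\
  sin (thzx s) * sqrt (d1 gzx s * d1 gzx s + d2 gzx s * d2 gzx s) = d2 gzx s.
Hypothesis thwy_polar : forall u,
  cos (thwy u) * sqrt (d1 gwy u * d1 gwy u + d2 gwy u * d2 gwy u) = d1 gwy u /\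
  sin (thwy u) * sqrt (d1 gwy u * d1 gwy u + d2 gwy u * d2 gwy u) = d2 gwy u.
Hypothesis thzx_periodic : forall s, thzx (s + 2 * PI) = thzx s + 2 * PI * IZR wzx.
Hypothesis thwy_periodic : forall u, thwy (u + 2 * PI) = thwy u + 2 * PI * IZR wwy.

Definition torus_phase (p : R * R) : R := 2 * thzx (fst p) + 2 * thwy (snd p).

Lemma lag_phase_torus_imm p :
  lag_phase (torus_imm gzx gwy) p = (cos (torus_phase p), sin (torus_phase p)).
Proof.
  destruct p as [s u].
  unfold lag_phase, partial_s, partial_u, cw_of, cz_of, torus_imm, torus_phase.
  cbn [cw cx cy cz fst snd]. rewrite !Derive_const.
  destruct (thzx_polar s) as [B1 B2]. destruct (thwy_polar u) as [A1 A2].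
  exact (lag_phase_product_polar _ _ _ _ (thwy u) (thzx s) _ _
           (velocity_norm_pos gwy u (wy_regular u)) (velocity_norm_pos gzx s (zx_regular s))
           A1 A2 B1 B2).
Qed.

Lemma continuous_torus_phase (c : R -> R * R) t :
  (forall t, continuous c t) -> continuous (fun t => torus_phase (c t)) t.
Proof.
  intros Hc. unfold torus_phase.
  apply @continuous_plus; apply @continuous_mult; try apply continuous_const.
  - apply (continuous_comp (fun t => fst (c t)) thzx); [apply continuous_fst_comp, Hc | apply thzx_continuous].
  - apply (continuous_comp (fun t => snd (c t)) thwy); [apply continuous_snd_comp, Hc | apply thwy_continuous].
Qed.

Lemma torus_phase_translate (x : R * R) (p q : Z) :
  torus_phase (fst x + 2 * PI * IZR p, snd x + 2 * PI * IZR q) =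
  torus_phase x + 2 * PI * IZR (2 * (p * wzx + q * wwy)).
Proof.
  unfold torus_phase; cbn [fst snd].
  rewrite (quasi_periodic_iter _ _ thzx_periodic), (quasi_periodic_iter _ _ thwy_periodic).
  rewrite mult_IZR, plus_IZR, !mult_IZR. simpl (IZR 2). ring.
Qed.

(* Any continuous argument of the phase along c differs from [torus_phase]
   by a constant. *)
Lemma maslov_index_torus_loop c m :
  torus_loop c -> maslov_index (torus_imm gzx gwy) c m ->
  exists p q : Z, m = (2 * (p * wzx + q * wwy))%Z.
Proof.
  intros [Hc [p [q Hc1]]] [phi [Hphi [Hphase Hm]]].
  exists p, q.
  assert (Hconst : phi 1 - torus_phase (c 1) = phi 0 - torus_phase (c 0)).
  { apply (continuous_2PIZ_valued_const (fun t => phi t - torus_phase (c t))).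
    - intros t. apply @continuous_minus; [apply Hphi | apply continuous_torus_phase, Hc].
    - intros t Ht. specialize (Hphase t Ht). rewrite lag_phase_torus_imm in Hphase.
      injection Hphase as E1 E2. apply cos_sin_eq_2PIZ; auto. }
  rewrite Hc1, torus_phase_translate in Hconst.
  pose proof PI_RGT_0.
  apply eq_IZR, Rmult_eq_reg_l with (2 * PI); lra.
Qed.

Lemma maslov_index_linear_loop (p q : Z) :
  let c := fun t : R => (2 * PI * IZR p * t, 2 * PI * IZR q * t) in
  torus_loop c /\ maslov_index (torus_imm gzx gwy) c (2 * (p * wzx + q * wwy))%Z.
Proof.
  intros c.
  assert (Hc : forall t, continuous c t).
  { intros t. apply continuous_pair; apply @continuous_mult;
      try apply continuous_const; apply continuous_id. }
  split.
  - split; [exact Hc |]. exists p, q. unfold c; simpl. f_equal; ring.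
  - exists (fun t => torus_phase (c t)). split; [| split].
    + intros t. apply continuous_torus_phase, Hc.
    + intros t _. apply lag_phase_torus_imm.
    + unfold c. rewrite !Rmult_1_r, !Rmult_0_r.
      rewrite <- (Rplus_0_l (2 * PI * IZR p)), <- (Rplus_0_l (2 * PI * IZR q)).
      change (torus_phase (fst (0, 0) + 2 * PI * IZR p, snd (0, 0) + 2 * PI * IZR q)
              - torus_phase (0, 0) = 2 * PI * IZR (2 * (p * wzx + q * wwy))).
      rewrite torus_phase_translate. ring.
Qed.

(* The Maslov indices of loops are exactly the integers 2 (p wzx + q wwy),
   i.e. the multiples of 2 gcd(wzx, wwy) (Bezout). *)
Lemma is_maslov_number_torus_imm :
  is_maslov_number (torus_imm gzx gwy) (2 * Z.gcd wzx wwy)%Z.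
Proof.
  set (G := Z.gcd wzx wwy).
  destruct (Z.eq_dec G 0) as [HG | HG].
  - right. split; [lia |].
    intros c m Hl Hm. destruct (maslov_index_torus_loop c m Hl Hm) as [p [q ->]].
    apply Z.gcd_eq_0 in HG as [-> ->]. lia.
  - left. pose proof (Z.gcd_nonneg wzx wwy) as HG0. fold G in HG0.
    split; [lia | split].
    + destruct (Z.gcd_bezout wzx wwy G eq_refl) as [p [q Hpq]].
      destruct (maslov_index_linear_loop p q) as [Hl Hm].
      rewrite Hpq in Hm. eexists. split; [exact Hl | exact Hm].
    + intros c m Hl Hm Hpos. destruct (maslov_index_torus_loop c m Hl Hm) as [p [q E]].
      assert (Hd : (G | p * wzx + q * wwy)%Z)
        by (apply Z.divide_add_r; apply Z.divide_mul_r;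
            [apply Z.gcd_divide_l | apply Z.gcd_divide_r]).
      apply Z.divide_pos_le in Hd; lia.
Qed.

End Torus.

Theorem corollary1p2 (n : nat) (qs : list quad) (gzx gwy : R -> R * R) :
  lagrangian_hypercube n qs ->
  smoothing (poly_zx qs) gzx ->
  smoothing (poly_wy qs) gwy ->
  is_maslov_number (torus_imm gzx gwy)
    (2 * Z.gcd (wG (poly_zx qs)) (wG (poly_wy qs)))%Z.
Proof.
  intros [Hcurve _] Szx Swy.
  destruct (tangent_angle_exists _ _ (poly_zx_alternating qs Hcurve) Szx)
    as [thzx [Czx [Pzx Qzx]]].
  destruct (tangent_angle_exists _ _ (poly_wy_alternating qs Hcurve) Swy)
    as [thwy [Cwy [Pwy Qwy]]].
  apply (is_maslov_number_torus_imm gzx gwy thzx thwy);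
    [apply Szx | apply Swy | assumption ..].
Qed.
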